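(* Let $\mathcal{Q}$ be either the category of unital involutive quantales with unital involutive homomorphisms or the category of strong involutive quantales with strong involutive homomorphisms. Let $\{L_i\}_i$ be a family of locales such that all but at most one of the $L_i$ are regular. Then the coproduct $\coprod_i L_i$ in $\mathcal{Q}$ is calculated in the category of locales, i.e. it is a locale (and hence coincides with the coproduct in the category of locales).
   Context: A quantale is a complete lattice with an associative multiplication distributing over arbitrary joins in both variables; $1$ is its top. It is unital if it has a multiplicative unit, strong if $1\cdot 1=1$. An involutive quantale has an involution $^*$ with $a^{**}=a$, $(a\cdot b)^*=b^*\cdot a^*$, $(\bigvee a_i)^*=\bigvee a_i^*$. Homomorphisms preserve joins and multiplication; unital ones preserve the unit, strong ones the top, involutive ones the involution. A locale is a complete lattice satisfying $a\wedge\bigvee_i b_i=\bigvee_i(a\wedge b_i)$, regarded as a unital involutive quantale with multiplication $\wedge$, unit the top, trivial involution; locale homomorphisms preserve joins, finite meets and top. A locale $L$ is regular if every $a\in L$ equals $\bigvee\{a'\in L: a'\prec a\}$, where $a'\prec a$ means there is $b\in L$ with $a'\wedge b=0$ and $a\vee b=1$. *)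

Definition img {A B : Type} (f : A -> B) (S : A -> Prop) : B -> Prop :=
  fun y => exists x, S x /\ y = f x.

Record InvQuantale := {
  qcar :> Type;
  qle : qcar -> qcar -> Prop;
  qsup : (qcar -> Prop) -> qcar;
  qmul : qcar -> qcar -> qcar;
  qinv : qcar -> qcar;
  qle_refl : forall a, qle a a;
  qle_antisym : forall a b, qle a b -> qle b a -> a = b;
  qle_trans : forall a b c, qle a b -> qle b c -> qle a c;
  qsup_ub : forall (S : qcar -> Prop) a, S a -> qle a (qsup S);
  qsup_least : forall (S : qcar -> Prop) b, (forall a, S a -> qle a b) -> qle (qsup S) b;
  qmul_assoc : forall a b c, qmul a (qmul b c) = qmul (qmul a b) c;
  qmul_supr : forall a (S : qcar -> Prop), qmul a (qsup S) = qsup (img (qmul a) S);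
  qmul_supl : forall a (S : qcar -> Prop), qmul (qsup S) a = qsup (img (fun x => qmul x a) S);
  qinv_inv : forall a, qinv (qinv a) = a;
  qinv_mul : forall a b, qinv (qmul a b) = qmul (qinv b) (qinv a);
  qinv_sup : forall (S : qcar -> Prop), qinv (qsup S) = qsup (img qinv S)
}.

Arguments qle {_} _ _.
Arguments qsup {_} _.
Arguments qmul {_} _ _.
Arguments qinv {_} _.

Definition qtop (Q : InvQuantale) : Q := qsup (fun _ : Q => True).
Definition qbot (Q : InvQuantale) : Q := qsup (fun _ : Q => False).
Definition qjoin {Q : InvQuantale} (a b : Q) : Q := qsup (fun x => x = a \/ x = b).
Definition qmeet {Q : InvQuantale} (a b : Q) : Q := qsup (fun x => qle x a /\ qle x b).

Definition is_unit (Q : InvQuantale) (e : Q) : Prop :=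
  forall a : Q, qmul e a = a /\ qmul a e = a.

Inductive qkind := UnitalInv | StrongInv.

Definition is_obj (k : qkind) (Q : InvQuantale) : Prop :=
  match k with
  | UnitalInv => exists e : Q, is_unit Q e
  | StrongInv => qmul (qtop Q) (qtop Q) = qtop Q
  end.

Definition is_hom (k : qkind) (Q R : InvQuantale) (f : Q -> R) : Prop :=
  (forall S : Q -> Prop, f (qsup S) = qsup (img f S)) /\
  (forall a b : Q, f (qmul a b) = qmul (f a) (f b)) /\
  (forall a : Q, f (qinv a) = qinv (f a)) /\
  match k with
  | UnitalInv => forall (e : Q) (e' : R), is_unit Q e -> is_unit R e' -> f e = e'
  | StrongInv => f (qtop Q) = qtop R
  end.

(* An involutive quantale "is a locale": multiplication is binary meet and
   the involution is trivial (a locale regarded as a unital involutive quantale). *)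
Definition is_locale (Q : InvQuantale) : Prop :=
  (forall a b : Q, qmul a b = qmeet a b) /\ (forall a : Q, qinv a = a).

Definition well_inside {Q : InvQuantale} (a' a : Q) : Prop :=
  exists b : Q, qmeet a' b = qbot Q /\ qjoin a b = qtop Q.

Definition regular (Q : InvQuantale) : Prop :=
  forall a : Q, a = qsup (fun a' => well_inside a' a).

Definition is_coproduct (k : qkind) {I : Type} (L : I -> InvQuantale)
  (C : InvQuantale) (inj : forall i, L i -> C) : Prop :=
  is_obj k C /\
  (forall i, is_hom k (L i) C (inj i)) /\
  (forall (Y : InvQuantale) (f : forall i, L i -> Y),
     is_obj k Y -> (forall i, is_hom k (L i) Y (f i)) ->
     exists h : C -> Y,
       is_hom k C Y h /\ (forall i (x : L i), h (inj i x) = f i x) /\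
       (forall h' : C -> Y, is_hom k C Y h' ->
          (forall i (x : L i), h' (inj i x) = f i x) -> forall c, h' c = h c)).

(** Let [e] be the common image in [C] of the tops of the [L i]; it is the
    unit, resp. the top, of [C].  The images of the injections lie below [e],
    have [e] as a two-sided unit, and are idempotent and self-adjoint.  Two of
    them commute: within one locale because meets commute; across two locales
    because one of them, say [L i], is regular, and for [a' ≪ a] with witness
    [b] the relations [a' ∧ b = 0], [a ∨ b = 1] give [a' X ≤ X a] and
    [X a' ≤ a X], so [a = ⋁ {a' | a' ≪ a}] commutes with [X].  Hence finite
    products of generators are idempotent and self-adjoint.  The universal
    property shows that [C] is generated by the injections under joins,
    products and involution, so every element of [C] is a join of such
    products; therefore every element is idempotent, self-adjoint and below
    the unit [e], which forces [a b = a ∧ b]. *)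

From Stdlib Require Import Classical ProofIrrelevance.

Definition sup_preserving {Q R : InvQuantale} (f : Q -> R) : Prop :=
  forall S : Q -> Prop, f (qsup S) = qsup (img f S).

Definition under_unit {Q : InvQuantale} (e x : Q) : Prop :=
  qle x e /\ qmul e x = x /\ qmul x e = x.

Definition generates {Q : InvQuantale} (G : Q -> Prop) : Prop :=
  forall D : Q -> Prop,
    (forall S : Q -> Prop, (forall x, S x -> D x) -> D (qsup S)) ->
    (forall a b, D a -> D b -> D (qmul a b)) ->
    (forall a, D a -> D (qinv a)) ->
    (forall g, G g -> D g) ->
    forall c, D c.

Section Lattice.

Variable Q : InvQuantale.
Implicit Types (a b c x y : Q) (S T : Q -> Prop).

Lemma qsup_mono S T : (forall x, S x -> T x) -> qle (qsup S) (qsup T).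
Proof. intros H; apply qsup_least; intros x Hx; apply qsup_ub, H, Hx. Qed.

Lemma qsup_ext S T : (forall x, S x <-> T x) -> qsup S = qsup T.
Proof. intros H; apply qle_antisym; apply qsup_mono; apply H. Qed.

Lemma qsup_img_fixed (f : Q -> Q) S :
  (forall x, S x -> f x = x) -> qsup (img f S) = qsup S.
Proof.
  intros Hf; apply qsup_ext; intros y; split.
  - intros [x [Hx ->]]; rewrite Hf; assumption.
  - intros Hy; exists y; split; [assumption | symmetry; apply Hf, Hy].
Qed.

Lemma qle_top a : qle a (qtop Q).
Proof. apply qsup_ub; trivial. Qed.

Lemma qbot_le a : qle (qbot Q) a.
Proof. apply qsup_least; contradiction. Qed.

Lemma qjoin_le a b c : qle a c -> qle b c -> qle (qjoin a b) c.
Proof. intros Ha Hb; apply qsup_least; intros x [-> | ->]; assumption. Qed.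

Lemma qjoin_r a b : qle a b -> qjoin a b = b.
Proof.
  intros Hab; apply qle_antisym.
  - apply qjoin_le; [assumption | apply qle_refl].
  - apply qsup_ub; right; reflexivity.
Qed.

Lemma qmeet_comm a b : qmeet a b = qmeet b a.
Proof. apply qsup_ext; intros x; split; intros [H1 H2]; split; assumption. Qed.

Lemma qmeet_idem a : qmeet a a = a.
Proof.
  apply qle_antisym.
  - apply qsup_least; intros x [H _]; exact H.
  - apply qsup_ub; split; apply qle_refl.
Qed.

Lemma qmeet_top_r a : qmeet a (qtop Q) = a.
Proof.
  apply qle_antisym.
  - apply qsup_least; intros x [H _]; exact H.
  - apply qsup_ub; split; [apply qle_refl | apply qle_top].
Qed.

End Lattice.

Lemma qsup_img_img {P A : Type} {R : InvQuantale} (f : A -> R) (g : P -> A) (S : P -> Prop) :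
  qsup (img f (img g S)) = qsup (img (fun x => f (g x)) S).
Proof.
  apply qsup_ext; intros z; split.
  - intros [y [[x [Hx ->]] ->]]; exists x; split; [exact Hx | reflexivity].
  - intros [x [Hx ->]]; exists (g x).
    split; [exists x; split; [exact Hx | reflexivity] | reflexivity].
Qed.

Section SupPreserving.

Variables (Q R : InvQuantale) (f : Q -> R).
Hypothesis f_sup : sup_preserving f.

Lemma sup_preserving_mono x y : qle x y -> qle (f x) (f y).
Proof.
  intros Hxy; rewrite <- (qjoin_r Q x y Hxy); unfold qjoin; rewrite f_sup.
  apply qsup_ub; exists x; split; [left | ]; reflexivity.
Qed.

Lemma sup_preserving_join a b : f (qjoin a b) = qjoin (f a) (f b).
Proof.
  unfold qjoin; rewrite f_sup; apply qsup_ext; intros y; split.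
  - intros [x [[-> | ->] ->]]; [left | right]; reflexivity.
  - intros [-> | ->]; eexists; split; [left | | right | ]; reflexivity.
Qed.

Lemma sup_preserving_bot : f (qbot Q) = qbot R.
Proof.
  unfold qbot; rewrite f_sup; apply qsup_ext; intros y; split.
  - intros [x [[] _]].
  - intros [].
Qed.

End SupPreserving.

Section QuantaleOps.

Variable Q : InvQuantale.
Implicit Types (a b c : Q).

Lemma qmul_sup_preserving_l b : sup_preserving (fun x : Q => qmul x b).
Proof. intros S; apply qmul_supl. Qed.

Lemma qmul_sup_preserving_r a : sup_preserving (@qmul Q a).
Proof. intros S; apply qmul_supr. Qed.

Lemma qmul_mono a a' b b' : qle a a' -> qle b b' -> qle (qmul a b) (qmul a' b').
Proof.
  intros Ha Hb; apply qle_trans with (qmul a' b).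
  - exact (sup_preserving_mono _ _ _ (qmul_sup_preserving_l b) a a' Ha).
  - exact (sup_preserving_mono _ _ _ (qmul_sup_preserving_r a') b b' Hb).
Qed.

Lemma qinv_mono a b : qle a b -> qle (qinv a) (qinv b).
Proof. apply sup_preserving_mono; intros S; apply qinv_sup. Qed.

Lemma qmul_joinr a b c : qmul c (qjoin a b) = qjoin (qmul c a) (qmul c b).
Proof. apply sup_preserving_join, qmul_sup_preserving_r. Qed.

Lemma qmul_joinl a b c : qmul (qjoin a b) c = qjoin (qmul a c) (qmul b c).
Proof. apply (sup_preserving_join _ _ (fun x => qmul x c)), qmul_sup_preserving_l. Qed.

Lemma qmul_qsup_le (S T : Q -> Prop) c :
  (forall s t, S s -> T t -> qle (qmul s t) c) -> qle (qmul (qsup S) (qsup T)) c.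
Proof.
  intros H; rewrite qmul_supl; apply qsup_least; intros y [s [Hs ->]].
  rewrite qmul_supr; apply qsup_least; intros z [t [Ht ->]]; auto.
Qed.

Lemma unit_unique e e' : is_unit Q e -> is_unit Q e' -> e = e'.
Proof. intros He He'; rewrite <- (proj2 (He' e)) at 1; apply He. Qed.

Lemma unit_inv e : is_unit Q e -> qinv e = e.
Proof.
  intros He; apply unit_unique; [intros a; split | exact He].
  - rewrite <- (qinv_inv Q a) at 1; rewrite <- qinv_mul, (proj2 (He _)); apply qinv_inv.
  - rewrite <- (qinv_inv Q a) at 1; rewrite <- qinv_mul, (proj1 (He _)); apply qinv_inv.
Qed.

Lemma qtop_inv : qinv (qtop Q) = qtop Q.
Proof.
  unfold qtop; rewrite qinv_sup; apply qsup_ext; intros x; split; [trivial |].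
  intros _; exists (qinv x); split; [trivial | symmetry; apply qinv_inv].
Qed.

Lemma orthogonal_mul_le_swap_l e u v w X :
  under_unit e X -> under_unit e u -> qmul u v = qbot Q -> qjoin w v = e ->
  qle (qmul u X) (qmul X w).
Proof.
  intros (HX & HeX & HXe) (Hu & _ & Hue) Huv Hwv.
  assert (Hsplit : qmul u X = qjoin (qmul (qmul u X) w) (qmul (qmul u X) v)).
  { rewrite <- qmul_joinr, Hwv, <- qmul_assoc, HXe; reflexivity. }
  rewrite Hsplit; apply qjoin_le.
  - apply qmul_mono; [| apply qle_refl].
    rewrite <- HeX at 2; apply qmul_mono; [exact Hu | apply qle_refl].
  - apply qle_trans with (qmul (qmul u e) v).
    + apply qmul_mono; [apply qmul_mono; [apply qle_refl | exact HX] | apply qle_refl].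
    + rewrite Hue, Huv; apply qbot_le.
Qed.

Lemma orthogonal_mul_le_swap_r e u v w X :
  under_unit e X -> under_unit e u -> qmul v u = qbot Q -> qjoin w v = e ->
  qle (qmul X u) (qmul w X).
Proof.
  intros (HX & HeX & HXe) (Hu & Heu & _) Hvu Hwv.
  assert (Hsplit : qmul X u = qjoin (qmul w (qmul X u)) (qmul v (qmul X u))).
  { rewrite <- qmul_joinl, Hwv, qmul_assoc, HeX; reflexivity. }
  rewrite Hsplit; apply qjoin_le.
  - apply qmul_mono; [apply qle_refl |].
    rewrite <- HXe at 2; apply qmul_mono; [apply qle_refl | exact Hu].
  - apply qle_trans with (qmul v (qmul e u)).
    + apply qmul_mono; [apply qle_refl | apply qmul_mono; [exact HX | apply qle_refl]].
    + rewrite Heu, Hvu; apply qbot_le.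
Qed.

End QuantaleOps.

Section Locale.

Variable L : InvQuantale.
Hypothesis L_locale : is_locale L.

Lemma locale_mul_comm (a b : L) : qmul a b = qmul b a.
Proof. rewrite !(proj1 L_locale); apply qmeet_comm. Qed.

Lemma locale_mul_idem (a : L) : qmul a a = a.
Proof. rewrite (proj1 L_locale); apply qmeet_idem. Qed.

Lemma locale_top_unit : is_unit L (qtop L).
Proof.
  intros a; rewrite locale_mul_comm, (proj1 L_locale), qmeet_top_r; split; reflexivity.
Qed.

End Locale.

(* The constant that morphisms of the category [k] must preserve: the unit,
   resp. the top. *)
Definition marked (k : qkind) (Q : InvQuantale) (e : Q) : Prop :=
  match k with
  | UnitalInv => is_unit Q e
  | StrongInv => e = qtop Q
  end.

Lemma marked_unique k (Q : InvQuantale) (e e' : Q) : marked k Q e -> marked k Q e' -> e = e'.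
Proof. destruct k; simpl; [apply unit_unique | intros -> ->; reflexivity]. Qed.

Lemma marked_inv k (Q : InvQuantale) (e : Q) : marked k Q e -> qinv e = e.
Proof. destruct k; simpl; [apply unit_inv | intros ->; apply qtop_inv]. Qed.

Lemma locale_top_marked k (L : InvQuantale) : is_locale L -> marked k L (qtop L).
Proof. destruct k; [apply locale_top_unit | reflexivity]. Qed.

Lemma is_obj_marked k (Q : InvQuantale) : is_obj k Q <-> exists e : Q, marked k Q e /\ qmul e e = e.
Proof.
  destruct k; simpl; split.
  - intros [e He]; exists e; split; [exact He | apply He].
  - intros [e [He _]]; exists e; exact He.
  - intros H; exists (qtop Q); split; [reflexivity | exact H].
  - intros [e [-> H]]; exact H.
Qed.

Lemma is_hom_marked k (Q R : InvQuantale) (f : Q -> R) :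
  is_hom k Q R f <->
  sup_preserving f /\ (forall a b, f (qmul a b) = qmul (f a) (f b)) /\
  (forall a, f (qinv a) = qinv (f a)) /\
  (forall e e', marked k Q e -> marked k R e' -> f e = e').
Proof.
  destruct k; [apply iff_refl |]; simpl.
  split; intros (Hs & Hm & Hi & Ht); repeat split; try assumption.
  - intros e e' -> ->; exact Ht.
  - apply Ht; reflexivity.
Qed.

Lemma is_hom_id k (Q : InvQuantale) : is_hom k Q Q (fun x => x).
Proof.
  apply is_hom_marked; repeat split.
  - intros S; apply qsup_ext; intros y; split.
    + intros Hy; exists y; split; [exact Hy | reflexivity].
    + intros [x [Hx ->]]; exact Hx.
  - apply marked_unique.
Qed.

Lemma coproduct_endo_id k I (L : I -> InvQuantale) (C : InvQuantale) (inj : forall i, L i -> C) :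
  is_coproduct k L C inj ->
  forall g : C -> C, is_hom k C C g -> (forall i x, g (inj i x) = inj i x) ->
  forall c, g c = c.
Proof.
  intros [hobj [hhom huniv]] g Hg Hginj c.
  destruct (huniv C inj hobj hhom) as [h [_ [_ Huniq]]].
  rewrite (Huniq g Hg Hginj c).
  exact (eq_sym (Huniq _ (is_hom_id k C) (fun _ _ => eq_refl) c)).
Qed.

Section Subquantale.

Variables (Q : InvQuantale) (D : Q -> Prop).
Hypothesis D_sup : forall S : Q -> Prop, (forall x, S x -> D x) -> D (qsup S).
Hypothesis D_mul : forall a b, D a -> D b -> D (qmul a b).
Hypothesis D_inv : forall a, D a -> D (qinv a).

Lemma sub_val_inj (a b : {x | D x}) : proj1_sig a = proj1_sig b -> a = b.
Proof. apply eq_sig_hprop; intros; apply proof_irrelevance. Qed.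

Lemma img_val_in (S : {x | D x} -> Prop) y : img (@proj1_sig Q D) S y -> D y.
Proof. intros [x [_ ->]]; exact (proj2_sig x). Qed.

Definition subquantale : InvQuantale.
Proof.
  refine {|
    qcar := {x | D x};
    qle a b := qle (proj1_sig a) (proj1_sig b);
    qsup S := exist D (qsup (img (@proj1_sig Q D) S)) (D_sup _ (img_val_in S));
    qmul a b := exist D (qmul (proj1_sig a) (proj1_sig b)) (D_mul _ _ (proj2_sig a) (proj2_sig b));
    qinv a := exist D (qinv (proj1_sig a)) (D_inv _ (proj2_sig a)) |};
  simpl; intros.
  - apply qle_refl.
  - apply sub_val_inj, qle_antisym; assumption.
  - eapply qle_trans; eassumption.
  - apply qsup_ub; exists a; split; [assumption | reflexivity].
  - apply qsup_least; intros y [x [Hx ->]]; auto.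
  - apply sub_val_inj, qmul_assoc.
  - apply sub_val_inj; simpl; rewrite qmul_supr, !qsup_img_img; reflexivity.
  - apply sub_val_inj; simpl; rewrite qmul_supl, !qsup_img_img; reflexivity.
  - apply sub_val_inj, qinv_inv.
  - apply sub_val_inj, qinv_mul.
  - apply sub_val_inj; simpl; rewrite qinv_sup, !qsup_img_img; reflexivity.
Defined.

Lemma sub_qtop : D (qtop Q) -> proj1_sig (qtop subquantale) = qtop Q.
Proof.
  intros Dtop; apply qle_antisym; [apply qle_top |].
  apply qsup_ub; exists (exist D (qtop Q) Dtop); split; trivial.
Qed.

Section Marked.

Variables (k : qkind) (e : Q).
Hypotheses (e_marked : marked k Q e) (D_e : D e).

Lemma sub_marked (y : subquantale) : marked k subquantale y <-> marked k Q (proj1_sig y).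
Proof.
  assert (Hlift : forall y : subquantale, marked k Q (proj1_sig y) -> marked k subquantale y).
  { unfold marked in *; destruct k.
    - intros y' Hy a; split; apply sub_val_inj; apply Hy.
    - intros y' Hy; apply sub_val_inj; rewrite sub_qtop; [exact Hy |].
      rewrite <- e_marked; exact D_e. }
  split; [| apply Hlift].
  intros Hy; set (ey := exist D e D_e : subquantale).
  rewrite (marked_unique k _ y ey Hy (Hlift ey e_marked)); exact e_marked.
Qed.

Lemma is_hom_into_sub (R : InvQuantale) (g : R -> subquantale) :
  is_hom k R subquantale g <-> is_hom k R Q (fun x => proj1_sig (g x)).
Proof.
  rewrite !is_hom_marked; split; intros (Hs & Hm & Hi & Ht); repeat split.
  - intros S; rewrite Hs; simpl; apply qsup_img_img.
  - intros a b; rewrite Hm; reflexivity.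
  - intros a; rewrite Hi; reflexivity.
  - intros e1 e2 H1 H2.
    rewrite (Ht e1 (exist D e D_e) H1 (proj2 (sub_marked (exist D e D_e)) e_marked)).
    exact (marked_unique k Q e e2 e_marked H2).
  - intros S; apply sub_val_inj; simpl; rewrite Hs; symmetry; apply qsup_img_img.
  - intros a b; apply sub_val_inj, Hm.
  - intros a; apply sub_val_inj, Hi.
  - intros e1 y H1 Hy; apply sub_val_inj, Ht; [exact H1 | apply sub_marked, Hy].
Qed.

End Marked.

End Subquantale.

Definition injection_generators {I : Type} {L : I -> InvQuantale} {C : InvQuantale}
  (inj : forall i, L i -> C) (e : C) : C -> Prop :=
  fun x => x = e \/ exists i y, x = inj i y.

Lemma coproduct_generated k I (L : I -> InvQuantale) (C : InvQuantale)
  (inj : forall i, L i -> C) (e : C) :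
  is_coproduct k L C inj -> marked k C e -> generates (injection_generators inj e).
Proof.
  intros hC He D D_sup D_mul D_inv HD.
  pose proof hC as (hobj & hhom & huniv).
  assert (D_e : D e) by (apply HD; left; reflexivity).
  assert (D_inj : forall i y, D (inj i y)) by (intros i y; apply HD; right; eauto).
  set (Y := subquantale C D D_sup D_mul D_inv).
  set (f i y := exist D (inj i y) (D_inj i y) : Y).
  assert (HY : is_obj k Y).
  { apply is_obj_marked; exists (exist D e D_e); split.
    - apply (sub_marked C D D_sup D_mul D_inv k e He D_e); exact He.
    - apply sub_val_inj; simpl.
      destruct (proj1 (is_obj_marked k C) hobj) as (e' & He' & Hee').
      rewrite (marked_unique k C e e' He He'); exact Hee'. }
  assert (Hf : forall i, is_hom k (L i) Y (f i)).
  { intros i; apply (is_hom_into_sub C D D_sup D_mul D_inv k e He D_e); exact (hhom i). }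
  destruct (huniv Y f HY Hf) as [h [Hh [Hhf _]]].
  intros c; rewrite <- (coproduct_endo_id k I L C inj hC (fun x => proj1_sig (h x))).
  - exact (proj2_sig (h c)).
  - exact (proj1 (is_hom_into_sub C D D_sup D_mul D_inv k e He D_e C h) Hh).
  - intros i y; rewrite Hhf; reflexivity.
Qed.

Lemma locale_of_idempotent_under_unit (Q : InvQuantale) (e : Q) :
  (forall c : Q, under_unit e c) -> (forall c : Q, qmul c c = c) -> (forall c : Q, qinv c = c) ->
  is_locale Q.
Proof.
  intros Hunit Hidem Hinv; split; [| exact Hinv].
  intros a b; apply qle_antisym.
  - destruct (Hunit a) as (_ & _ & Hae); destruct (Hunit b) as (Hb & Heb & _).
    apply qsup_ub; split.
    + rewrite <- Hae at 2; apply qmul_mono; [apply qle_refl | exact Hb].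
    + rewrite <- Heb at 2; apply qmul_mono; [apply (Hunit a) | apply qle_refl].
  - apply qsup_least; intros x [Hxa Hxb].
    rewrite <- (Hidem x); apply qmul_mono; assumption.
Qed.

Section CommutingIdempotentGenerators.

Variables (Q : InvQuantale) (e : Q) (G : Q -> Prop).
Hypothesis G_under_unit : forall g, G g -> under_unit e g.
Hypothesis G_idem : forall g, G g -> qmul g g = g.
Hypothesis G_inv : forall g, G g -> qinv g = g.
Hypothesis G_comm : forall g h, G g -> G h -> qmul g h = qmul h g.

Inductive products : Q -> Prop :=
  | products_gen g : G g -> products g
  | products_mul (a b : Q) : products a -> products b -> products (qmul a b).

Lemma products_under_unit p : products p -> under_unit e p.
Proof.
  induction 1 as [g Hg | a b _ (Ha & Hea & Hae) _ (Hb & Heb & Hbe)]; [auto |].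
  repeat split.
  - apply qle_trans with (qmul a e); [| rewrite Hae; exact Ha].
    apply qmul_mono; [apply qle_refl | exact Hb].
  - rewrite qmul_assoc, Hea; reflexivity.
  - rewrite <- qmul_assoc, Hbe; reflexivity.
Qed.

Lemma products_comm_gen p g : products p -> G g -> qmul p g = qmul g p.
Proof.
  intros Hp Hg; induction Hp as [h Hh | a b _ IHa _ IHb]; [auto |].
  rewrite <- qmul_assoc, IHb, qmul_assoc, IHa, qmul_assoc; reflexivity.
Qed.

Lemma products_comm p q : products p -> products q -> qmul p q = qmul q p.
Proof.
  intros Hp Hq; induction Hq as [g Hg | a b _ IHa _ IHb].
  - apply products_comm_gen; assumption.
  - rewrite qmul_assoc, IHa, <- qmul_assoc, IHb, qmul_assoc; reflexivity.
Qed.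

Lemma products_idem p : products p -> qmul p p = p.
Proof.
  induction 1 as [g Hg | a b Ha IHa Hb IHb]; [auto |].
  transitivity (qmul (qmul a a) (qmul b b)); [| rewrite IHa, IHb; reflexivity].
  rewrite <- !qmul_assoc; f_equal; rewrite !qmul_assoc; f_equal.
  apply products_comm; assumption.
Qed.

Lemma products_inv p : products p -> qinv p = p.
Proof.
  induction 1 as [g Hg | a b Ha IHa Hb IHb]; [auto |].
  rewrite qinv_mul, IHa, IHb; apply products_comm; assumption.
Qed.

Definition products_below (c : Q) : Q -> Prop := fun p => products p /\ qle p c.

Lemma join_products_below (c : Q) : qle (qsup (products_below c)) c.
Proof. apply qsup_least; intros p [_ Hp]; exact Hp. Qed.

Lemma le_join_products_below :
  generates G -> forall c, qle c (qsup (products_below c)).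
Proof.
  intros HG; apply HG.
  - intros S HS; apply qsup_least; intros x Hx.
    apply qle_trans with (qsup (products_below x)); [auto |].
    apply qsup_mono; intros p [Hp Hpx]; split; [exact Hp |].
    apply qle_trans with x; [exact Hpx | apply qsup_ub, Hx].
  - intros a b Ha Hb.
    apply qle_trans with (qmul (qsup (products_below a)) (qsup (products_below b))).
    + apply qmul_mono; assumption.
    + apply qmul_qsup_le; intros p q [Hp Hpa] [Hq Hqb].
      apply qsup_ub; split; [apply products_mul; assumption | apply qmul_mono; assumption].
  - intros a Ha; apply qle_trans with (qinv (qsup (products_below a))); [apply qinv_mono, Ha |].
    rewrite qinv_sup; apply qsup_least; intros y [p [[Hp Hpa] ->]].
    rewrite (products_inv p Hp); apply qsup_ub; split; [exact Hp |].
    rewrite <- (products_inv p Hp); apply qinv_mono, Hpa.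
  - intros g Hg; apply qsup_ub; split; [apply products_gen, Hg | apply qle_refl].
Qed.

Lemma locale_of_commuting_idempotent_generators : generates G -> is_locale Q.
Proof.
  intros HG.
  assert (Hjoin : forall c, c = qsup (products_below c)).
  { intros c; apply qle_antisym; [apply le_join_products_below, HG | apply join_products_below]. }
  assert (Hunit : forall c, under_unit e c).
  { intros c; repeat split.
    - rewrite (Hjoin c); apply qsup_least; intros p [Hp _]; apply products_under_unit, Hp.
    - rewrite (Hjoin c), qmul_supr; apply qsup_img_fixed.
      intros p [Hp _]; apply products_under_unit, Hp.
    - rewrite (Hjoin c), qmul_supl; apply qsup_img_fixed.
      intros p [Hp _]; apply products_under_unit, Hp. }
  apply (locale_of_idempotent_under_unit Q e Hunit).
  - intros c; destruct (Hunit c) as (Hc & _ & Hce); apply qle_antisym.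
    + apply qle_trans with (qmul c e); [| rewrite Hce; apply qle_refl].
      apply qmul_mono; [apply qle_refl | exact Hc].
    + rewrite (Hjoin c) at 1; apply qsup_least; intros p [Hp Hpc].
      rewrite <- (products_idem p Hp); apply qmul_mono; assumption.
  - intros c; rewrite (Hjoin c), qinv_sup; apply qsup_img_fixed.
    intros p [Hp _]; apply products_inv, Hp.
Qed.

End CommutingIdempotentGenerators.

Section LocaleInjections.

Variables (I : Type) (L : I -> InvQuantale) (C : InvQuantale) (inj : forall i, L i -> C) (e : C).
Hypothesis L_locale : forall i, is_locale (L i).
Hypothesis L_regular : forall i j, i <> j -> regular (L i) \/ regular (L j).
Hypothesis inj_sup : forall i, sup_preserving (inj i).
Hypothesis inj_mul : forall i a b, inj i (qmul a b) = qmul (inj i a) (inj i b).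
Hypothesis inj_inv : forall i a, inj i (qinv a) = qinv (inj i a).
Hypothesis inj_top : forall i, inj i (qtop (L i)) = e.
Hypothesis e_idem : qmul e e = e.
Hypothesis e_inv : qinv e = e.

Lemma inj_under_unit i y : under_unit e (inj i y).
Proof.
  unfold under_unit; rewrite <- (inj_top i), <- !inj_mul.
  destruct (locale_top_unit _ (L_locale i) y) as [-> ->].
  repeat split; apply sup_preserving_mono, qle_top; apply inj_sup.
Qed.

Lemma regular_inj_comm i a X :
  regular (L i) -> under_unit e X -> qmul (inj i a) X = qmul X (inj i a).
Proof.
  intros Hreg HX.
  assert (Hwi : forall a', well_inside a' a ->
            qle (qmul (inj i a') X) (qmul X (inj i a)) /\
            qle (qmul X (inj i a')) (qmul (inj i a) X)).
  { intros a' [b [Hab Hjoin]].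
    assert (Horth : qmul (inj i a') (inj i b) = qbot C).
    { rewrite <- inj_mul, (proj1 (L_locale i)), Hab; apply sup_preserving_bot, inj_sup. }
    assert (Hcompl : qjoin (inj i a) (inj i b) = e).
    { rewrite <- sup_preserving_join, Hjoin; [apply inj_top | apply inj_sup]. }
    split.
    - apply (orthogonal_mul_le_swap_l C e _ (inj i b)); auto using inj_under_unit.
    - apply (orthogonal_mul_le_swap_r C e _ (inj i b)); auto using inj_under_unit.
      rewrite <- inj_mul, locale_mul_comm, inj_mul; auto. }
  apply qle_antisym; rewrite (Hreg a) at 1; rewrite inj_sup;
    [rewrite qmul_supl | rewrite qmul_supr];
    apply qsup_least; intros _ [_ [[a' [Ha' ->]] ->]]; apply Hwi, Ha'.
Qed.

Lemma inj_comm i j a b : qmul (inj i a) (inj j b) = qmul (inj j b) (inj i a).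
Proof.
  destruct (classic (i = j)) as [<- | Hij].
  - rewrite <- !inj_mul, locale_mul_comm; auto.
  - destruct (L_regular i j Hij) as [Hreg | Hreg].
    + apply regular_inj_comm; auto using inj_under_unit.
    + symmetry; apply regular_inj_comm; auto using inj_under_unit.
Qed.

Lemma locale_of_generating_injections :
  generates (injection_generators inj e) -> is_locale C.
Proof.
  apply (locale_of_commuting_idempotent_generators C e).
  - intros g [-> | (i & y & ->)]; [repeat split; auto using qle_refl | apply inj_under_unit].
  - intros g [-> | (i & y & ->)]; [exact e_idem |].
    rewrite <- inj_mul; f_equal; apply locale_mul_idem, L_locale.
  - intros g [-> | (i & y & ->)]; [exact e_inv |].
    rewrite <- inj_inv; f_equal; apply (L_locale i).
  - intros g h [-> | (i & y & ->)] [-> | (j & z & ->)]; try reflexivity.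
    + destruct (inj_under_unit j z) as (_ & -> & ->); reflexivity.
    + destruct (inj_under_unit i y) as (_ & -> & ->); reflexivity.
    + apply inj_comm.
Qed.

End LocaleInjections.

Theorem lemma4p3 (k : qkind) (I : Type) (L : I -> InvQuantale)
  (hL : forall i, is_locale (L i))
  (hreg : forall i j : I, i <> j -> regular (L i) \/ regular (L j))
  (C : InvQuantale) (inj : forall i, L i -> C)
  (hC : is_coproduct k L C inj) :
  is_locale C.
Proof.
  pose proof hC as (hobj & hhom & _).
  destruct (proj1 (is_obj_marked k C) hobj) as (e & He & Hee).
  assert (inj_top : forall i, inj i (qtop (L i)) = e).
  { intros i; destruct (proj1 (is_hom_marked _ _ _ _) (hhom i)) as (_ & _ & _ & Ht).
    apply Ht; [apply locale_top_marked, hL | exact He]. }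
  apply (locale_of_generating_injections I L C inj e hL hreg
           (fun i => proj1 (hhom i)) (fun i => proj1 (proj2 (hhom i)))
           (fun i => proj1 (proj2 (proj2 (hhom i)))) inj_top Hee (marked_inv k C e He)).
  exact (coproduct_generated k I L C inj e hC He).
Qed.
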